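(* Let $k$ be a field with $\mathrm{char}(k)\ne2$ and let $n\ge4$. There exists an $n\times n$ quantum parameter matrix $\mathfrak{q}$ such that $\mathrm{Aut}_{\mathrm{gr}}(S_{\mathfrak{q}}(k^n))\cong(k^\times)^n\rtimes D_{2n}$.
   Context: An $n\times n$ quantum parameter matrix is a matrix $\mathfrak{q}=(q_{ij})$ over $k$ with $q_{ii}=1$ and $q_{ij}q_{ji}=1$ for all $i,j$. $S_{\mathfrak{q}}(k^n)$ is the $k$-algebra generated by the standard basis $v_1,\dots,v_n$ of $k^n$ with relations $v_jv_i=q_{ij}v_iv_j$, graded by $\deg v_i=1$; $\mathrm{Aut}_{\mathrm{gr}}$ denotes its group of degree-preserving algebra automorphisms, viewed as a subgroup of $\mathrm{GL}(n,k)$. $D_{2n}$ is the dihedral group of order $2n$, viewed as the subgroup of $\mathfrak{S}_n$ generated by $(1\,2\,\cdots\,n)$ and $i\mapsto 1-i \bmod n$; in $(k^\times)^n\rtimes D_{2n}$, $(k^\times)^n$ is the group of invertible diagonal matrices and $D_{2n}$ acts by permuting coordinates (the product is realized as a group of monomial matrices). *)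

From HB Require Import structures.
From mathcomp Require Import all_boot all_order all_algebra all_fingroup.
From mathcomp Require Import mpoly.
Set Implicit Arguments. Unset Strict Implicit. Unset Printing Implicit Defensive.
Import GRing.Theory.
Local Open Scope ring_scope.

Definition quantum_param (k : fieldType) (n : nat) (q : 'M[k]_n) : Prop :=
  (forall i, q i i = 1) /\ (forall i j, q i j * q j i = 1).

(* Twisting scalar:  v^a * v^b = qtw a b * v^(a+b), where
   v^a = v_1^(a_1) ... v_n^(a_n) (ordered monomials, PBW basis of S_q);
   from v_i v_j = q_ji v_j v_i, each pair (v_i in a, v_j in b) with j < i
   contributes q_ji. *)
Definition qtw (k : fieldType) (n : nat) (q : 'M[k]_n)
    (a b : 'X_{1..n}) : k :=
  \prod_(i < n) \prod_(j < n | (j < i)%N) q j i ^+ (a i * b j).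

(* Multiplication of S_q(k^n), realized on the k-vector space with basis the
   ordered monomials (represented by {mpoly k[n]}): generator v_i = 'X_i. *)
Definition qmul (k : fieldType) (n : nat) (q : 'M[k]_n)
    (p r : {mpoly k[n]}) : {mpoly k[n]} :=
  \sum_(a <- msupp p) \sum_(b <- msupp r)
     (p@_a * r@_b * qtw q a b) *: 'X_[a + b].

(* g in GL(n,k) is a graded automorphism of S_q(k^n): there is a bijective
   k-linear unital multiplicative map f of S_q(k^n) with
   f(v_i) = sum_j g_ji v_j (column i of g is the image of v_i). *)
Definition qgr_aut (k : fieldType) (n : nat) (q : 'M[k]_n) (g : 'M[k]_n) : Prop :=
  g \in unitmx /\
  exists f : {mpoly k[n]} -> {mpoly k[n]},
    [/\ forall (c : k) p r, f (c *: p + r) = c *: f p + f r,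
        bijective f,
        f 1 = 1,
        forall p r, f (qmul q p r) = qmul q (f p) (f r) &
        forall i : 'I_n, f 'X_i = \sum_(j < n) g j i *: 'X_j].

(* Dihedral group D_{2n} <= S_n generated by the rotation (1 2 ... n) and the
   reflection i |-> 1 - i mod n.  With 0-based labels j = i - 1 these are
   j |-> j + 1 mod n (ordS) and j |-> n - 1 - j (rev_ord). *)
Definition dih_rot (n : nat) : 'S_n := perm (@ordS_inj n).
Definition dih_refl (n : nat) : 'S_n := perm (@rev_ord_inj n).
Definition D2n (n : nat) : {set 'S_n} := <<[set dih_rot n; dih_refl n]>>%g.

(* (k^x)^n ⋊ D_{2n} realized as monomial matrices: an invertible diagonal
   matrix times the permutation matrix of an element of D_{2n}. *)
Definition monomial_D2n (k : fieldType) (n : nat) (g : 'M[k]_n) : Prop :=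
  exists (d : 'rV[k]_n) (s : 'S_n),
    [/\ forall i, d 0 i != 0, s \in D2n n & g = diag_mx d *m perm_mx s].

Definition mx_group_iso (k : fieldType) (n : nat)
    (A B : 'M[k]_n -> Prop) : Prop :=
  exists (phi psi : 'M[k]_n -> 'M[k]_n),
    [/\ forall g, A g -> B (phi g),
        forall h, B h -> A (psi h),
        forall g, A g -> psi (phi g) = g,
        forall h, B h -> phi (psi h) = h &
        forall g h, A g -> A h -> phi (g *m h) = phi g *m phi h].

(* Take q_ij = 1 when i and j are equal or adjacent on the n-cycle, and
   q_ij = -1 otherwise.  The graded automorphisms of S_q are then exactly the
   monomial matrices diag(d) P_s with s in D_2n, so the isomorphism is the
   identity.

   If s preserves q, the map v^m |-> c(m) v^(m o s) is an automorphism, where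
   c(m) = prod_i d_(s^-1 i)^(m_i) * prod_(y<x) w(x,y)^(m_x m_y) and w compares
   the twisting scalars before and after permuting.  Conversely, applying an
   automorphism g to v_j v_i = q_ij v_i v_j and comparing coefficients of
   v_a v_b shows (char k <> 2) that each row of g is supported on a vertex or
   an edge of the cycle, and that the 2x2 minors of g on adjacent columns and
   non-adjacent rows vanish.  For n >= 4 these conditions force the invertible
   matrix g to be monomial, and its permutation is an automorphism of the
   cycle, i.e. lies in D_2n. *)

From HB Require Import structures.
From mathcomp Require Import all_boot all_algebra all_fingroup.
From mathcomp Require Import mpoly ssrcomplements zify ring.
Set Implicit Arguments. Unset Strict Implicit. Unset Printing Implicit Defensive.
Import GRing.Theory.
Local Open Scope ring_scope.

Section LinearExtension.
Variables (k : fieldType) (n : nat) (V : lmodType k).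
Implicit Types (p : {mpoly k[n]}) (F : 'X_{1..n} -> V).

(* Locked, lest the [linear_sum]-style rewrite rules unfold [linext F p] into
   its defining sum and rewrite inside it. *)
Fact linext_key : unit. Proof. by []. Qed.
Definition linext F p : V :=
  locked_with linext_key (\sum_(m <- msupp p) p@_m *: F m).

Lemma linextE F p : linext F p = \sum_(m <- msupp p) p@_m *: F m.
Proof. exact: unlock. Qed.

Lemma linextwE F p d : (msize p <= d)%N ->
  linext F p = \sum_(m : 'X_{1..n < d}) p@_m *: F m.
Proof.
move=> le_pd; rewrite linextE (big_mksub 'X_{1..n < d}) ?msupp_uniq //=; last first.
  by move=> m /msize_mdeg_lt /leq_trans; apply.
by rewrite big_rmcond //= => m /memN_msupp_eq0 ->; rewrite scale0r.
Qed.

Lemma linext_is_linear F : linear (linext F).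
Proof.
move=> c p r; pose d := (msize p + msize r + msize (c *: p + r))%N.
rewrite !(@linextwE _ _ d) /d; try lia.
rewrite scaler_sumr -big_split; apply: eq_bigr => m _ /=.
by rewrite mcoeffD mcoeffZ scalerDl scalerA.
Qed.

HB.instance Definition _ F :=
  GRing.isLinear.Build k {mpoly k[n]} V _ (linext F) (linext_is_linear F).

Lemma linextX F m : linext F 'X_[m] = F m.
Proof. by rewrite linextE msuppX big_seq1 mcoeffX eqxx scale1r. Qed.

Lemma linear_mpoly_eq (L1 L2 : {linear {mpoly k[n]} -> V}) :
  (forall m, L1 'X_[m] = L2 'X_[m]) -> L1 =1 L2.
Proof.
by move=> LX p; rewrite [p]mpolyE !linear_sum; apply: eq_bigr => m _; rewrite !linearZ LX.
Qed.

End LinearExtension.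

Section QuantumAffineSpace.
Variables (k : fieldType) (n : nat) (q : 'M[k]_n).
Implicit Types (p r : {mpoly k[n]}) (a b : 'X_{1..n}).

Lemma qmulEl p r :
  qmul q p r = linext (fun a => linext (fun b => qtw q a b *: 'X_[a + b]) r) p.
Proof.
rewrite linextE; apply: eq_bigr => a _; rewrite linextE scaler_sumr.
by apply: eq_bigr => b _; rewrite !scalerA.
Qed.

Lemma qmulEr p r :
  qmul q p r = linext (fun b => linext (fun a => qtw q a b *: 'X_[a + b]) p) r.
Proof.
rewrite /qmul linextE exchange_big; apply: eq_bigr => b _; rewrite linextE scaler_sumr.
by apply: eq_bigr => a _; rewrite !scalerA [r@_b * _]mulrC.
Qed.

Lemma qmulZl c p r : qmul q (c *: p) r = c *: qmul q p r.
Proof. by rewrite !qmulEl linearZ. Qed.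

Lemma qmulZr c p r : qmul q p (c *: r) = c *: qmul q p r.
Proof. by rewrite !qmulEr linearZ. Qed.

Lemma qmul_suml (I : Type) (s : seq I) (P : pred I) (E : I -> {mpoly k[n]}) r :
  qmul q (\sum_(i <- s | P i) E i) r = \sum_(i <- s | P i) qmul q (E i) r.
Proof. by rewrite qmulEl linear_sum; apply: eq_bigr => i _; rewrite qmulEl. Qed.

Lemma qmul_sumr (I : Type) (s : seq I) (P : pred I) (E : I -> {mpoly k[n]}) p :
  qmul q p (\sum_(i <- s | P i) E i) = \sum_(i <- s | P i) qmul q p (E i).
Proof. by rewrite qmulEr linear_sum; apply: eq_bigr => i _; rewrite qmulEr. Qed.

Lemma qmulXX a b : qmul q 'X_[a] 'X_[b] = qtw q a b *: 'X_[a + b].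
Proof. by rewrite qmulEl !linextX. Qed.

Lemma qtw_mnm1 x y : qtw q U_(x) U_(y) = if (y < x)%N then q y x else 1.
Proof.
rewrite /qtw (bigD1 x) //= [X in _ * X]big1 => [|i /negbTE xi]; last first.
  by apply: big1 => j _; rewrite mnm1E eq_sym xi mul0n expr0.
rewrite big_mkcond (bigD1 y) //= big1 => [|j /negbTE yj]; last first.
  by rewrite [U_(y)%MM j]mnm1E eq_sym yj muln0 expr0 if_same.
by rewrite !mnm1E !eqxx muln1 expr1 !mulr1.
Qed.

Lemma qtw_prod a b : qtw q a b = \prod_x \prod_y qtw q U_(x) U_(y) ^+ (a x * b y).
Proof.
apply: eq_bigr => x _; rewrite big_mkcond; apply: eq_bigr => y _.
by rewrite qtw_mnm1; case: ifP; rewrite ?expr1n.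
Qed.

Lemma mnm1D_eq (i j a b : 'I_n) :
  (U_(i) + U_(j) == U_(a) + U_(b))%MM = ((i, j) \in [set (a, b); (b, a)]).
Proof.
rewrite !inE !xpair_eqE; apply/eqP/idP => [E|]; last first.
  by case/orP=> /andP[/eqP -> /eqP ->]; rewrite // addmC.
have [ai|ai] := eqVneq a i.
  by move: E; rewrite ai => /addmI/eqP; rewrite eq_mnm1 => ->.
have := congr1 (fun m : 'X_{1..n} => m i) E; rewrite !mnmDE !mnm1E eqxx (negbTE ai).
case: (eqVneq b i) => [bi|//] _; move: E; rewrite bi [(U_(a) + _)%MM]addmC => /addmI/eqP.
by rewrite eq_mnm1 => ->; rewrite orbT.
Qed.

Lemma mcoeff_qmul_deg1 (u w : 'I_n -> k) (a b : 'I_n) :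
  (qmul q (\sum_i u i *: 'X_i) (\sum_i w i *: 'X_i))@_(U_(a) + U_(b)) =
  \sum_(ij in [set (a, b); (b, a)]) u ij.1 * w ij.2 * qtw q U_(ij.1) U_(ij.2).
Proof.
transitivity ((\sum_i \sum_j (u i * w j * qtw q U_(i) U_(j)) *: 'X_[U_(i) + U_(j)])
                @_(U_(a) + U_(b))).
  congr (_@__); rewrite qmul_suml; apply: eq_bigr => i _.
  rewrite qmulZl qmul_sumr scaler_sumr; apply: eq_bigr => j _.
  by rewrite qmulZr qmulXX !scalerA.
rewrite pair_bigA raddf_sum [RHS]big_mkcond; apply: eq_bigr => -[i j] _ /=.
by rewrite mcoeffZ mcoeffX mnm1D_eq; case: ifP; rewrite ?mulr1 ?mulr0.
Qed.

Lemma qmul_linear_morph (L : {linear {mpoly k[n]} -> {mpoly k[n]}}) :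
    (forall a b, L (qmul q 'X_[a] 'X_[b]) = qmul q (L 'X_[a]) (L 'X_[b])) ->
  forall p r, L (qmul q p r) = qmul q (L p) (L r).
Proof.
move=> LX p r; rewrite [p]mpolyE [r]mpolyE qmul_suml !linear_sum qmul_suml.
apply: eq_bigr => a _; rewrite qmulZl !linearZ qmulZl /=; congr (_ *: _).
rewrite qmul_sumr !linear_sum qmul_sumr; apply: eq_bigr => b _.
by rewrite qmulZr !linearZ qmulZr /= LX.
Qed.

Section QuantumParameters.
Hypothesis qP : quantum_param q.

Lemma qtw_mnm1C x y : qtw q U_(x) U_(y) = q y x * qtw q U_(y) U_(x).
Proof.
rewrite !qtw_mnm1; case: ltngtP => [xy|yx|/val_inj->]; rewrite ?mulr1 //.
  by rewrite qP.2.
by rewrite qP.1.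
Qed.

Lemma qparam_neq0 i j : q i j != 0.
Proof.
by apply/eqP => q0; have := qP.2 i j; rewrite q0 mul0r => /eqP; rewrite eq_sym oner_eq0.
Qed.

Lemma qtw_mnm1_neq0 x y : qtw q U_(x) U_(y) != 0.
Proof. by rewrite qtw_mnm1; case: ifP => _; rewrite ?qparam_neq0 ?oner_neq0. Qed.

Lemma qmulXC i j : qmul q 'X_j 'X_i = q i j *: qmul q 'X_i 'X_j.
Proof. by rewrite !qmulXX addmC [qtw q _ _]qtw_mnm1C scalerA. Qed.

Section GradedAutomorphism.
Variable g : 'M[k]_n.
Hypothesis gA : qgr_aut q g.

Lemma qgr_aut_relation i j :
  qmul q (\sum_l g l j *: 'X_l) (\sum_l g l i *: 'X_l) =
  q i j *: qmul q (\sum_l g l i *: 'X_l) (\sum_l g l j *: 'X_l).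
Proof.
case: gA => _ [f [f_lin _ _ fM fX]].
by rewrite -!fX -!fM qmulXC (scalable_linear f_lin).
Qed.

Lemma qgr_aut_square i j (a : 'I_n) : (1 - q i j) * (g a i * g a j) = 0.
Proof.
have := congr1 (mcoeff (U_(a) + U_(a))) (qgr_aut_relation i j).
rewrite mcoeffZ !mcoeff_qmul_deg1 setUid !big_set1 /= qtw_mnm1 ltnn !mulr1 => E.
by rewrite mulrBl mul1r -E mulrC subrr.
Qed.

Lemma qgr_aut_commutation i j (a b : 'I_n) : a != b ->
  g a j * g b i * (q b a - q i j) = g a i * g b j * (q i j * q b a - 1).
Proof.
move=> ab; have := congr1 (mcoeff (U_(a) + U_(b))) (qgr_aut_relation i j).
rewrite mcoeffZ !mcoeff_qmul_deg1 !big_setU1 ?inE ?xpair_eqE ?(negbTE ab) //=.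
rewrite !big_set1 /= [qtw q U_(a) U_(b)]qtw_mnm1C => /eqP; rewrite -subr_eq0 => /eqP E.
apply: (mulIf (qtw_mnm1_neq0 b a)); apply/eqP; rewrite -subr_eq0; apply/eqP.
by rewrite -E; ring.
Qed.

End GradedAutomorphism.

End QuantumParameters.

End QuantumAffineSpace.

Section MonomialMap.
Variables (k : fieldType) (n : nat) (h : 'X_{1..n} -> 'X_{1..n}) (c : 'X_{1..n} -> k).
Local Notation T := (linext (fun m => c m *: 'X_[h m]) : {mpoly k[n]} -> {mpoly k[n]}).

Lemma monomial_map_bij h' : cancel h h' -> cancel h' h -> (forall m, c m != 0) ->
  bijective T.
Proof.
move=> hK h'K c_neq0.
pose T' := linext (fun m => (c (h' m))^-1 *: 'X_[h' m]) : {mpoly k[n]} -> {mpoly k[n]}.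
exists T'; [apply: (linear_mpoly_eq (L1 := T' \o T) (L2 := idfun)) => m /=
           |apply: (linear_mpoly_eq (L1 := T \o T') (L2 := idfun)) => m /=].
  by rewrite linextX linearZ /= linextX hK scalerKV.
by rewrite linextX linearZ /= linextX h'K scalerK.
Qed.

Lemma monomial_map1 : h 0%MM = 0%MM -> c 0%MM = 1 -> T 1 = 1.
Proof. by move=> h0 c0; rewrite -mpolyX0 linextX h0 c0 scale1r. Qed.

Lemma monomial_map_qmul (q : 'M[k]_n) :
    (forall a b, h (a + b)%MM = (h a + h b)%MM) ->
    (forall a b, c (a + b)%MM * qtw q a b = c a * c b * qtw q (h a) (h b)) ->
  forall p r, T (qmul q p r) = qmul q (T p) (T r).
Proof.
move=> hD hc; apply: qmul_linear_morph => a b.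
rewrite qmulXX linearZ /= !linextX qmulZl qmulZr qmulXX !scalerA hD.
by rewrite mulrC hc.
Qed.

End MonomialMap.

Section QuadraticCharacter.
Variables (k : fieldType) (n : nat) (w : 'I_n -> 'I_n -> k).

Definition mquad (m : 'X_{1..n}) : k :=
  \prod_(x < n) \prod_(y < n | (y < x)%N) w x y ^+ (m x * m y).

Lemma mquad0 : mquad 0%MM = 1.
Proof. by apply: big1 => x _; apply: big1 => y _; rewrite mnm0E mul0n expr0. Qed.

Lemma mquad_mnm1 i : mquad U_(i)%MM = 1.
Proof.
apply: big1 => x _; apply: big1 => y yx; rewrite !mnm1E.
case: (eqVneq i x) => [ix|]; last by rewrite mul0n expr0.
by case: (eqVneq i y) => [iy|]; [rewrite -ix -iy ltnn in yx | rewrite muln0 expr0].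
Qed.

Lemma mquad_neq0 m : (forall x y, w x y != 0) -> mquad m != 0.
Proof.
by move=> w_neq0; apply/prodf_neq0 => x _; apply/prodf_neq0 => y _; rewrite expf_neq0.
Qed.

Lemma mquadD a b : (forall x y, w x y = w y x) -> (forall x, w x x = 1) ->
  mquad (a + b)%MM = mquad a * mquad b * \prod_x \prod_y w x y ^+ (a x * b y).
Proof.
move=> wC w1.
have -> : mquad (a + b)%MM = mquad a * mquad b *
    ((\prod_(x < n) \prod_(y < n | (y < x)%N) w x y ^+ (a x * b y)) *
     (\prod_(x < n) \prod_(y < n | (y < x)%N) w x y ^+ (b x * a y))).
  rewrite /mquad -!big_split; apply: eq_bigr => x _ /=.
  rewrite -!big_split; apply: eq_bigr => y _ /=.
  by rewrite !mnmDE -!exprD; congr (_ ^+ _); ring.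
congr (_ * _).
under [X in _ * X]eq_bigr => x _ do rewrite big_mkcond.
rewrite [X in _ * X]exchange_big -big_split; apply: eq_bigr => x _ /=.
rewrite big_mkcond -big_split; apply: eq_bigr => y _ /=.
case: (ltngtP x y) => [xy|yx|/val_inj->]; rewrite ?mul1r ?mulr1 //.
  by rewrite wC mulnC.
by rewrite w1 expr1n.
Qed.

End QuadraticCharacter.

Section MonomialAutomorphism.
Variables (k : fieldType) (n : nat) (q : 'M[k]_n) (s : 'S_n) (d : 'rV[k]_n).
Hypotheses (qP : quantum_param q) (qs : forall i j, q (s i) (s j) = q i j).
Hypothesis d_neq0 : forall i, d 0 i != 0.

Local Notation "m # s" := [multinom m (s i) | i < n]
  (at level 40, left associativity, format "m # s").
Local Notation pi := (s^-1)%g.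
Local Notation Q x y := (qtw q U_(x) U_(y)).

(* [qtw q (a # s) (b # s)] is [qtw q a b] times the bilinear factor
   [\prod_x \prod_y w x y ^+ (a x * b y)], and [w] is symmetric with trivial
   diagonal, so [mquad w] absorbs it by [mquadD]. *)
Let w x y := Q (pi x) (pi y) / Q x y.
Let c (m : 'X_{1..n}) := (\prod_i d 0 (pi i) ^+ m i) * mquad w m.

Let qpi i j : q (pi i) (pi j) = q i j.
Proof. by rewrite -[in RHS](permKV s i) -[in RHS](permKV s j) qs. Qed.

Let wC x y : w x y = w y x.
Proof.
rewrite /w qtw_mnm1C // [Q x y]qtw_mnm1C // qpi.
by field; rewrite qparam_neq0 ?qtw_mnm1_neq0.
Qed.

Let w1 x : w x x = 1.
Proof. by rewrite /w !qtw_mnm1 !ltnn divr1. Qed.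

Let c_neq0 m : c m != 0.
Proof.
rewrite mulf_neq0 ?mquad_neq0 // => [|x y]; last first.
  by rewrite mulf_neq0 ?invr_eq0 ?qtw_mnm1_neq0.
by apply/prodf_neq0 => i _; rewrite expf_neq0.
Qed.

Let c0 : c 0%MM = 1.
Proof. by rewrite /c mquad0 mulr1; apply: big1 => i _; rewrite mnm0E expr0. Qed.

Let c_mnm1 i : c U_(i)%MM = d 0 (pi i).
Proof.
rewrite /c mquad_mnm1 mulr1 (bigD1 i) //= mnm1E eqxx expr1 big1 ?mulr1 // => j ji.
by rewrite mnm1E eq_sym (negbTE ji) expr0.
Qed.

Let mpermD a b : (a + b)%MM # s = (a # s + b # s)%MM.
Proof. by apply/mnmP => i; rewrite !(mnmE, mnmDE). Qed.

Let mperm0 : 0%MM # s = 0%MM.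
Proof. by apply/mnmP => i; rewrite !(mnmE, mnm0E). Qed.

Let qtw_mperm a b :
  qtw q (a # s) (b # s) = \prod_x \prod_y Q (pi x) (pi y) ^+ (a x * b y).
Proof.
rewrite qtw_prod (reindex_inj (@perm_inj _ pi)); apply: eq_bigr => x _.
by rewrite (reindex_inj (@perm_inj _ pi)); apply: eq_bigr => y _; rewrite !mnmE !permKV.
Qed.

Let c_cocycle a b : c (a + b)%MM * qtw q a b = c a * c b * qtw q (a # s) (b # s).
Proof.
have cD : \prod_i d 0 (pi i) ^+ (a + b)%MM i =
    (\prod_i d 0 (pi i) ^+ a i) * \prod_i d 0 (pi i) ^+ b i.
  by rewrite -big_split; apply: eq_bigr => i _; rewrite mnmDE exprD.
have wQ : \prod_x \prod_y Q (pi x) (pi y) ^+ (a x * b y) =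
    (\prod_x \prod_y w x y ^+ (a x * b y)) * \prod_x \prod_y Q x y ^+ (a x * b y).
  rewrite -big_split; apply: eq_bigr => x _; rewrite -big_split; apply: eq_bigr => y _.
  by rewrite /= -exprMn /w divfK ?qtw_mnm1_neq0.
rewrite /c (mquadD _ _ wC w1) cD qtw_prod qtw_mperm wQ; ring.
Qed.

Lemma qgr_aut_monomial : qgr_aut q (diag_mx d *m perm_mx s).
Proof.
split.
  rewrite unitmx_mul unitmx_perm andbT unitmxE det_diag unitfE.
  by apply/prodf_neq0 => i _; exact: d_neq0.
exists (linext (fun m => c m *: 'X_[m # s])); split.
- exact: linext_is_linear.
- exact: monomial_map_bij (mpermKV s) (mpermK s) c_neq0.
- exact: monomial_map1 mperm0 c0.
- exact: monomial_map_qmul mpermD c_cocycle.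
- move=> i; rewrite linextX c_mnm1 (bigD1 (pi i)) //= big1 ?addr0 => [|j ji].
    rewrite mul_diag_mx !mxE permKV eqxx mulr1; congr (_ *: 'X_[_]).
    by apply/mnmP => j; rewrite !mnmE -[in RHS](inj_eq (@perm_inj _ s)) permKV.
  rewrite mul_diag_mx !mxE -[s j == i](inj_eq (@perm_inj _ pi)) permK.
  by rewrite (negbTE ji) mulr0 scale0r.
Qed.

End MonomialAutomorphism.

Section RelationAutomorphisms.
Variables (T : finType) (e : rel T).

Definition rel_perms : {set {perm T}} :=
  [set t : {perm T} | [forall x, forall y, e (t x) (t y) == e x y]].

Lemma rel_permsP (t : {perm T}) :
  reflect (forall x y, e (t x) (t y) = e x y) (t \in rel_perms).
Proof.
rewrite inE; apply: (iffP forallP) => [H x y|H x]; last by apply/forallP => y; rewrite H.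
by have /forallP/(_ y)/eqP := H x.
Qed.

Lemma rel_perms_group_set : group_set rel_perms.
Proof.
apply/group_setP; split; first by apply/rel_permsP => x y; rewrite !perm1.
by move=> s t /rel_permsP es /rel_permsP et; apply/rel_permsP => x y; rewrite !permM et es.
Qed.

Canonical rel_perms_group := Group rel_perms_group_set.

End RelationAutomorphisms.

Section CycleGraph.
Variable n : nat.
Implicit Types (i j x y c : 'I_n) (t : 'S_n).

Definition cycle_adj (i j : 'I_n) : bool := (j == ordS i) || (i == ordS j).

Lemma cycle_adjC i j : cycle_adj i j = cycle_adj j i.
Proof. by rewrite /cycle_adj orbC. Qed.

Lemma cycle_adjS i : cycle_adj i (ordS i).
Proof. by rewrite /cycle_adj eqxx. Qed.

Lemma cycle_adjE i j : cycle_adj i j = (j == ordS i) || (j == ord_pred i).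
Proof.
by rewrite /cycle_adj; congr (_ || _); rewrite -(inj_eq (@ord_pred_inj n)) ordSK eq_sym.
Qed.

Lemma val_ordS i : val (ordS i) = if (i.+1 < n)%N then i.+1 else 0%N.
Proof.
rewrite /=; case: ltnP => [lt_in|le_ni]; first by rewrite modn_small.
have -> : i.+1 = n by apply/eqP; rewrite eqn_leq le_ni ltn_ord.
by rewrite modnn.
Qed.

Lemma val_iter_ordS m i : val (iter m (@ordS n) i) = ((i + m) %% n)%N.
Proof.
elim: m => [|m IH] /=; first by rewrite addn0 modn_small.
by rewrite IH -addn1 modnDml -addnA addn1.
Qed.

Lemma cycle_adj_rot x y : cycle_adj (dih_rot n x) (dih_rot n y) = cycle_adj x y.
Proof. by rewrite !permE /cycle_adj !(inj_eq (@ordS_inj n)). Qed.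

Lemma rev_ord_eqS x y : (rev_ord y == ordS (rev_ord x)) = (x == ordS y).
Proof.
rewrite -!val_eqE !val_ordS /=; have := ltn_ord x; have := ltn_ord y.
by case: ifP => ? ; case: ifP => ? ? ?; apply/eqP/eqP; lia.
Qed.

Lemma cycle_adj_refl x y : cycle_adj (dih_refl n x) (dih_refl n y) = cycle_adj x y.
Proof. by rewrite !permE /cycle_adj !rev_ord_eqS orbC. Qed.

Lemma D2n_cycle_adj t x y : t \in D2n n -> cycle_adj (t x) (t y) = cycle_adj x y.
Proof.
suff /subsetP/(_ t) D2n_sub : D2n n \subset rel_perms_group cycle_adj.
  by move=> /D2n_sub /rel_permsP; apply.
rewrite gen_subG; apply/subsetP => u /set2P[]->; apply/rel_permsP.
  exact: cycle_adj_rot.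
exact: cycle_adj_refl.
Qed.

Hypothesis n_gt3 : (3 < n)%N.

Lemma iter_ordS_neq m i : (0 < m < 4)%N -> iter m (@ordS n) i != i.
Proof.
case/andP=> m_gt0 m_lt4; rewrite -val_eqE val_iter_ordS.
rewrite -[X in _ != X](@modn_small i n) // -{2}[val i]addn0 eqn_modDl mod0n.
by rewrite modn_small -?lt0n //; apply: leq_trans n_gt3.
Qed.

Lemma ordS_neq i : ordS i != i. Proof. exact: (@iter_ordS_neq 1). Qed.
Lemma ordS2_neq i : ordS (ordS i) != i. Proof. exact: (@iter_ordS_neq 2). Qed.
Lemma ordS3_neq i : ordS (ordS (ordS i)) != i. Proof. exact: (@iter_ordS_neq 3). Qed.

Lemma cycle_adj_irr i : ~~ cycle_adj i i.
Proof. by rewrite /cycle_adj orbb eq_sym ordS_neq. Qed.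

Lemma cycle_adj_neq i j : cycle_adj i j -> i != j.
Proof. by apply: contraTneq => ->; rewrite cycle_adj_irr. Qed.

Lemma cycle_adj_triangle i c : cycle_adj i c -> ~~ cycle_adj (ordS i) c.
Proof.
have predE x y : (ord_pred x == y) = (x == ordS y).
  by rewrite -(inj_eq (@ordS_inj n)) ord_predK.
rewrite !cycle_adjE => /orP[]/eqP->; rewrite ordSK negb_or.
  by rewrite (inj_eq (@ordS_inj n)) eq_sym !ordS_neq.
by rewrite !predE eq_sym ordS3_neq eq_sym ordS_neq.
Qed.

Lemma dih_rotX m x : (dih_rot n ^+ m)%g x = iter m (@ordS n) x.
Proof.
elim: m => [|m IH]; first by rewrite expg0 perm1.
by rewrite expgSr permM permE IH.
Qed.

Lemma rev_ordS x : rev_ord x = ordS (rev_ord (ordS x)).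
Proof.
have val_rev y : val (rev_ord y) = (n - y.+1)%N by [].
apply/val_inj; rewrite val_ordS !val_rev val_ordS; have := ltn_ord x.
by case: (ltnP x.+1 n) => ?; case: ifP => ?; lia.
Qed.

Let z : 'I_n := Ordinal (leq_trans (isT : (0 < 4)%N) n_gt3).

Lemma cycle_hom_rot t : (forall x y, cycle_adj x y -> cycle_adj (t x) (t y)) ->
  t (ordS z) = ordS (t z) -> t = (dih_rot n ^+ t z)%g.
Proof.
move=> t_adj tS.
have tSX m : t (iter m (@ordS n) z) = iter m (@ordS n) (t z) /\
             t (iter m.+1 (@ordS n) z) = iter m.+1 (@ordS n) (t z).
  elim: m => [//|m [IH1 IH2]]; split=> //.
  have := t_adj _ _ (cycle_adjS (iter m.+1 (@ordS n) z)).
  rewrite IH2 cycle_adjE => /orP[]/eqP // tE.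
  have /perm_inj/eqP : t (iter m.+2 (@ordS n) z) = t (iter m (@ordS n) z).
    by rewrite tE IH1 /= ordSK.
  by rewrite !iterS (negbTE (ordS2_neq _)).
apply/permP => x; rewrite dih_rotX.
have -> : x = iter x (@ordS n) z by apply/val_inj; rewrite val_iter_ordS add0n modn_small.
by have [-> _] := tSX x; apply/val_inj; rewrite !val_iter_ordS /= add0n modnDml addnC.
Qed.

Lemma cycle_adj_D2n t : (forall x y, cycle_adj x y -> cycle_adj (t x) (t y)) ->
  t \in D2n n.
Proof.
move=> t_adj; have rotD : dih_rot n \in D2n n by rewrite mem_gen ?setU11.
have reflD : dih_refl n \in D2n n by rewrite mem_gen // !inE eqxx orbT.
have := t_adj _ _ (cycle_adjS z); rewrite {1}/cycle_adj => /orP[]/eqP tS.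
  by rewrite (cycle_hom_rot t_adj tS) groupX.
pose t' := (t * dih_refl n)%g.
have t'_adj x y : cycle_adj x y -> cycle_adj (t' x) (t' y).
  by move=> xy; rewrite !permM cycle_adj_refl t_adj.
have t'S : t' (ordS z) = ordS (t' z) by rewrite !permM !permE tS -rev_ordS.
have -> : t = (t' * (dih_refl n)^-1)%g by rewrite mulgK.
by rewrite groupM ?groupV // (cycle_hom_rot t'_adj t'S) groupX.
Qed.

End CycleGraph.

Section UnitMatrix.
Variables (k : fieldType) (n : nat) (g : 'M[k]_n).
Hypothesis g_unit : g \in unitmx.

Lemma unitmx_perm_support : exists s : 'S_n, forall r, g r (s r) != 0.
Proof.
have [s /prodf_neq0 gs|g0] := pickP (fun s : 'S_n => \prod_i g i (s i) != 0).
  by exists s => r; apply: gs.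
move: g_unit; rewrite unitmxE unitfE /determinant big1 ?eqxx // => s _.
by move/negbFE/eqP: (g0 s) => ->; rewrite mulr0.
Qed.

Lemma unitmx_row_scale_neq a b (l : k) : a != b -> row b g != l *: row a g.
Proof.
move=> ab; apply/eqP; rewrite !rowE scalemxAl => /(can_inj (mulmxK g_unit)).
move/matrixP/(_ 0 b); rewrite !mxE !eqxx eq_sym (negbTE ab) mulr0 /=.
by move/eqP; rewrite oner_eq0.
Qed.

End UnitMatrix.

Section CycleMonomial.
Variables (k : fieldType) (n : nat) (g : 'M[k]_n).
Hypotheses (n_gt3 : (3 < n)%N) (g_unit : g \in unitmx).
Hypothesis g_row : forall a i j, i != j -> ~~ cycle_adj i j -> g a i * g a j = 0.
Hypothesis g_minor : forall i j a b,
  cycle_adj i j -> a != b -> ~~ cycle_adj a b -> g a j * g b i = g a i * g b j.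

Lemma row_edge_support a i : g a i != 0 -> g a (ordS i) != 0 ->
  forall c, c != i -> c != ordS i -> g a c = 0.
Proof.
move=> gai gaSi c ci cSi.
have [ic|nic] := boolP (cycle_adj i c).
  have nSic : ~~ cycle_adj c (ordS i) by rewrite cycle_adjC (cycle_adj_triangle n_gt3).
  by move/eqP: (g_row a cSi nSic); rewrite mulf_eq0 (negbTE gaSi) orbF => /eqP.
have nci : ~~ cycle_adj c i by rewrite cycle_adjC.
by move/eqP: (g_row a ci nci); rewrite mulf_eq0 (negbTE gai) orbF => /eqP.
Qed.

Section AdjacentPair.
Variables (a j : 'I_n).
Hypotheses (ga1 : g a (ordS j) != 0) (ga2 : g a (ordS (ordS j)) != 0).

Local Notation cols := [:: j; ordS j; ordS (ordS j); ordS (ordS (ordS j))].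

Lemma nonadj_row_vanishes b : b != a -> ~~ cycle_adj a b -> {in cols, forall c, g b c = 0}.
Proof.
move=> ba nab; have ab : a != b by rewrite eq_sym.
have ga_out := row_edge_support ga1 ga2.
have gb3 : g b (ordS (ordS (ordS j))) = 0.
  have := g_minor (cycle_adjS (ordS (ordS j))) ab nab.
  rewrite ga_out ?mul0r; last 2 first.
  - by rewrite !(inj_eq (@ordS_inj n)) (ordS2_neq n_gt3).
  - by rewrite !(inj_eq (@ordS_inj n)) (ordS_neq n_gt3).
  by move/esym/eqP; rewrite mulf_eq0 (negbTE ga2) => /eqP.
have gb0 : g b j = 0.
  have := g_minor (cycle_adjS j) ab nab.
  rewrite (ga_out j) ?mul0r; last 2 first.
  - by rewrite eq_sym (ordS_neq n_gt3).
  - by rewrite eq_sym (ordS2_neq n_gt3).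
  by move/eqP; rewrite mulf_eq0 (negbTE ga1) => /eqP.
have E := g_minor (cycle_adjS (ordS j)) ab nab.
have [gb1|gb1] := eqVneq (g b (ordS j)) 0.
  have gb2 : g b (ordS (ordS j)) = 0.
    by move: E; rewrite gb1 mulr0 => /esym/eqP; rewrite mulf_eq0 (negbTE ga1) => /eqP.
  by move=> c; rewrite !inE => /or4P[]/eqP->.
have gb2 : g b (ordS (ordS j)) != 0.
  apply/eqP => gb2; move/eqP: E; rewrite gb2 mulr0.
  by rewrite mulf_eq0 (negbTE ga2) (negbTE gb1).
have gb_out := row_edge_support gb1 gb2.
have /eqP[] := unitmx_row_scale_neq g_unit (g b (ordS j) / g a (ordS j)) ab.
apply/rowP => c; rewrite !mxE.
have [->|c1] := eqVneq c (ordS j); first by rewrite divfK.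
have [->|c2] := eqVneq c (ordS (ordS j)).
  by apply: (mulfI ga1); rewrite -E; field.
by rewrite (ga_out c) // (gb_out c) // mulr0.
Qed.

(* The four distinct columns [cols] carry nonzero entries in four distinct rows,
   all of which must be among the three rows [ord_pred a], [a], [ordS a]. *)
Lemma adjacent_pair_absurd : False.
Proof.
have [s gs] := unitmx_perm_support g_unit.
have cols_uniq : uniq cols.
  rewrite /= !inE !negb_or !(inj_eq (@ordS_inj n)) !(eq_sym j).
  by rewrite (ordS3_neq n_gt3) (ordS2_neq n_gt3) (ordS_neq n_gt3).
have rows_uniq : uniq (map (s^-1)%g cols) by rewrite map_inj_uniq //; apply: perm_inj.
suff /uniq_leq_size : {subset map (s^-1)%g cols <= [:: ord_pred a; a; ordS a]}.
  by move/(_ rows_uniq); rewrite size_map.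
move=> _ /mapP[c c_cols ->]; set r := (s^-1)%g c.
have grc : g r c != 0 by have := gs r; rewrite permKV.
have [->|ra] := eqVneq r a; first by rewrite !inE eqxx orbT.
have [ar|] := boolP (cycle_adj a r).
  by move: ar; rewrite cycle_adjE !inE => /orP[]->; rewrite ?orbT.
by move/(nonadj_row_vanishes ra)/(_ c c_cols)/eqP; rewrite (negbTE grc).
Qed.

End AdjacentPair.

Lemma cycle_monomial : exists s : 'S_n,
  (forall r, g r (s r) != 0) /\ (forall r c, c != s r -> g r c = 0).
Proof.
have [s gs] := unitmx_perm_support g_unit; exists s; split => // r c cs.
apply/eqP; apply: contraT => grc; exfalso.
have : cycle_adj (s r) c.
  apply: contraT => nadj; have sc : s r != c by rewrite eq_sym.
  by have /eqP := g_row r sc nadj; rewrite mulf_eq0 (negbTE (gs r)) (negbTE grc).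
rewrite cycle_adjE => /orP[]/eqP ce.
  by apply: (@adjacent_pair_absurd r (ord_pred (s r))); rewrite ord_predK ?gs // -ce.
by apply: (@adjacent_pair_absurd r (ord_pred c)); rewrite ord_predK // ce ord_predK.
Qed.

End CycleMonomial.

Section GraphQuantumSpace.
Variables (k : fieldType) (n : nat) (e : rel 'I_n).
Hypothesis eC : forall i j, e i j = e j i.

Definition graph_qmx : 'M[k]_n := \matrix_(i, j) if (i == j) || e i j then 1 else -1.

Lemma graph_qmx_param : quantum_param graph_qmx.
Proof.
split=> [i|i j]; rewrite !mxE ?eqxx // eq_sym eC.
by case: ifP; rewrite ?mulr1 ?mulrNN ?mulr1.
Qed.

Lemma graph_qmx_perm (s : 'S_n) : (forall x y, e (s x) (s y) = e x y) ->
  forall i j, graph_qmx (s i) (s j) = graph_qmx i j.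
Proof. by move=> es i j; rewrite !mxE (inj_eq (@perm_inj _ s)) es. Qed.

Hypothesis two : 2%:R != 0 :> k.
Variable g : 'M[k]_n.
Hypothesis gA : qgr_aut graph_qmx g.

Let two_neq0 : (1 + 1 : k) != 0. Proof. exact: two. Qed.

Lemma graph_aut_row a i j : i != j -> ~~ e i j -> g a i * g a j = 0.
Proof.
move=> ij nij; have := qgr_aut_square graph_qmx_param gA i j a.
rewrite mxE (negbTE ij) (negbTE nij) opprK => /eqP.
by rewrite mulf_eq0 (negbTE two_neq0) => /eqP.
Qed.

Lemma graph_aut_minor i j a b :
  e i j -> a != b -> ~~ e a b -> g a j * g b i = g a i * g b j.
Proof.
move=> eij ab nab; have := qgr_aut_commutation graph_qmx_param gA i j ab.
rewrite !mxE eij orbT eq_sym (negbTE ab) eC (negbTE nab) mul1r -opprD.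
by move/(mulIf _); apply; rewrite oppr_eq0.
Qed.

End GraphQuantumSpace.

Section CycleQuantumSpace.
Variables (k : fieldType) (n : nat).
Hypotheses (two : 2%:R != 0 :> k) (n_gt3 : (3 < n)%N).
Local Notation q := (graph_qmx k (@cycle_adj n)).

Lemma cycle_qgr_aut_monomial g : qgr_aut q g -> monomial_D2n g.
Proof.
move=> gA; have g_row := graph_aut_row (@cycle_adjC n) two gA.
have g_minor := graph_aut_minor (@cycle_adjC n) two gA.
have [s [gs g0]] := cycle_monomial n_gt3 gA.1 g_row g_minor.
exists (\row_r g r (s r)), s; split.
- by move=> r; rewrite mxE.
- rewrite -[s]invgK groupV; apply: (cycle_adj_D2n n_gt3) => x y xy.
  apply: contraT => nxy; set a := (s^-1)%g x; set b := (s^-1)%g y.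
  have ab : a != b by rewrite (inj_eq (@perm_inj _ _)) cycle_adj_neq.
  have /eqP := g_minor x y a b xy ab nxy.
  rewrite (g0 a y); last by rewrite permKV eq_sym cycle_adj_neq.
  rewrite mul0r eq_sym mulf_eq0; have := gs a; have := gs b.
  by rewrite /a /b !permKV => /negbTE-> /negbTE->.
- apply/matrixP => r c; rewrite mul_diag_mx !mxE.
  by have [<-|sc] := eqVneq (s r) c; rewrite ?mulr1 // mulr0 g0 // eq_sym.
Qed.

Lemma monomial_cycle_qgr_aut g : monomial_D2n g -> qgr_aut q g.
Proof.
case=> d [s [d_neq0 sD ->]]; apply: qgr_aut_monomial d_neq0.
  exact: graph_qmx_param (@cycle_adjC n).
by apply: graph_qmx_perm => x y; apply: D2n_cycle_adj.
Qed.

End CycleQuantumSpace.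

Theorem proposition3p3 (k : fieldType) (n : nat) :
  (2%:R : k) != 0 -> (4 <= n)%N ->
  exists q : 'M[k]_n, quantum_param q /\
    mx_group_iso (qgr_aut q) (@monomial_D2n k n).
Proof.
move=> two n_gt3; exists (graph_qmx k (@cycle_adj n)).
split; first exact: graph_qmx_param (@cycle_adjC n).
exists id, id; split=> // g.
  exact: cycle_qgr_aut_monomial.
exact: monomial_cycle_qgr_aut.
Qed.
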